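(* Let $k\ge5$ and let $E$ be a set with $\{0,1,2,k\}\subseteq E\subset\{0,1,\ldots,k\}$ and $|E|=k$ (so exactly one element of $\{3,\ldots,k-1\}$ is missing from $E$). Then the number of $\tau\in\mathcal{S}_k$ with $\mathcal{J}(\tau)=E$ equals $2^{k-3}$ if $k-1\notin E$, and $2^{k-4}$ if $k-1\in E$.
   Context: The pattern of a word of $j$ distinct letters is its order-preserving relabeling by $\{1,\ldots,j\}$; the length-$j$ initial pattern of $\tau$ is the pattern of $\tau_1\ldots\tau_j$. The $j$-set $\mathcal{J}(\tau)$ of $\tau\in\mathcal{S}_k$ is the set consisting of $0$ together with all $j\in\{1,\ldots,k\}$ such that the length-$j$ initial pattern of $\tau$ is an involution in $\mathcal{S}_j$. *)

From mathcomp Require Import all_boot all_order all_fingroup.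
Set Implicit Arguments. Unset Strict Implicit. Unset Printing Implicit Defensive.

(* Permutations tau in S_k are 'S_k (permutations of 'I_k = {0,...,k-1});
   the one-line word tau_1 ... tau_k is the sequence of values below
   (0-based values; relabeling by an order-isomorphism does not matter). *)
Definition perm_word (k : nat) (tau : 'S_k) : seq nat :=
  [seq val (tau i) | i <- enum 'I_k].

Definition pattern (w : seq nat) : seq nat :=
  [seq count (fun y => y < x) w | x <- w].

Definition is_involution_word (p : seq nat) : bool :=
  [forall i : 'I_(size p), nth 0 p (nth 0 p i) == i].

Definition init_pattern (k : nat) (tau : 'S_k) (j : nat) : seq nat :=
  pattern (take j (perm_word tau)).

Definition jset (k : nat) (tau : 'S_k) : {set 'I_k.+1} :=
  [set j : 'I_k.+1 | (val j == 0) ||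
     ((1 <= val j) && is_involution_word (init_pattern tau j))].

From mathcomp Require Import all_boot all_order all_fingroup.
From mathcomp Require Import zify.
Set Implicit Arguments. Unset Strict Implicit. Unset Printing Implicit Defensive.

(* Grow a permutation one letter at a time: [extend p a] appends a last letter
   of value [a] and bumps the old letters [>= a] by one.  This is a bijection
   onto the permutations of the next length that leaves the initial patterns,
   hence the j-set below the new length, unchanged.  With [m] the element
   missing from [E], we count, length by length, the words whose j-set is
   everything but [m].

   An involution [p] of length [n] with last letter [c] extends to an
   involution only by [a = n] or [a = c], and [a = c] works exactly when the
   positions [c, ..., n-1] of [p] carry [n-1, ..., c]; both extensions again
   end in such a decreasing block.  Hence below [m] every admissible word has
   two children, giving [2^(n-1)] words of length [n < m].  Lengths [m] and
   [m+1] require leaving the involutions and coming back, which a case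
   analysis on the last two blocks allows in exactly one way: [2^(m-2)] words
   of length [m+1].  The prefix of length [m] of such a word is no involution,
   so the word does not end in a decreasing block and has a single child;
   from length [m+2] on every word has two children again. *)

Definition perm_seq n (s : seq nat) :=
  [&& size s == n, all (fun x => x < n) s & uniq s].

Definition extend (p : seq nat) a := rcons [seq x + (a <= x) | x <- p] a.

Fixpoint perm_words n :=
  if n is n'.+1 then [seq extend p a | p <- perm_words n', a <- iota 0 n]
  else [:: [::]].

Section PermSeq.

Variables (n : nat) (p : seq nat).
Hypothesis pp : perm_seq n p.

Lemma perm_seq_size : size p = n.
Proof. by case/and3P: pp => /eqP. Qed.

Lemma perm_seq_lt i : i < n -> nth 0 p i < n.
Proof.
case/and3P: pp => _ /allP lt_p _ lt_i; apply: lt_p.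
by rewrite mem_nth // perm_seq_size.
Qed.

Lemma perm_seq_inj i j : i < n -> j < n -> nth 0 p i = nth 0 p j -> i = j.
Proof.
case/and3P: pp => _ _ up lt_i lt_j eq_ij; apply/eqP.
by rewrite -(nth_uniq 0 _ _ up) ?perm_seq_size // eq_ij.
Qed.

End PermSeq.

Lemma perm_seqP n p : size p = n -> (forall i, i < n -> nth 0 p i < n) ->
  (forall i j, i < n -> j < n -> nth 0 p i = nth 0 p j -> i = j) -> perm_seq n p.
Proof.
move=> size_p lt_p inj_p; apply/and3P; split; first by rewrite size_p.
  by apply/(all_nthP 0) => i; rewrite size_p; apply: lt_p.
by apply/(uniqP 0) => i j; rewrite !inE size_p; apply: inj_p.
Qed.

Lemma size_extend p a : size (extend p a) = (size p).+1.
Proof. by rewrite size_rcons size_map. Qed.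

Lemma nth_extend p a i : i < size p -> nth 0 (extend p a) i = nth 0 p i + (a <= nth 0 p i).
Proof. by move=> lt_i; rewrite nth_rcons size_map lt_i (nth_map 0). Qed.

Lemma nth_extend_last p a n : size p = n -> nth 0 (extend p a) n = a.
Proof. by move=> <-; rewrite nth_rcons size_map ltnn eqxx. Qed.

Lemma perm_seq_extend n p a : perm_seq n p -> a <= n -> perm_seq n.+1 (extend p a).
Proof.
move=> pp le_an; have size_p := perm_seq_size pp.
have lt_p := perm_seq_lt pp.
apply: perm_seqP; first by rewrite size_extend size_p.
  move=> i; rewrite ltnS leq_eqVlt => /predU1P[->|lt_i].
    by rewrite (nth_extend_last _ size_p).
  by rewrite nth_extend ?size_p //; have := lt_p _ lt_i; lia.
move=> i j; rewrite ltnS leq_eqVlt => /predU1P[->|lt_i];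
  rewrite ltnS leq_eqVlt => /predU1P[->|lt_j] //.
- by rewrite (nth_extend_last _ size_p) nth_extend ?size_p //; lia.
- by rewrite (nth_extend_last _ size_p) nth_extend ?size_p //; lia.
rewrite !nth_extend ?size_p // => eq_ij.
by apply: (perm_seq_inj pp) => //; lia.
Qed.

Lemma perm_seqS_extend n s :
  perm_seq n.+1 s -> exists p a, [/\ perm_seq n p, a <= n & s = extend p a].
Proof.
move=> ps; have size_s := perm_seq_size ps.
set a := nth 0 s n; set p := [seq x - (a < x) | x <- take n s].
have le_an : a <= n by rewrite -ltnS; apply: (perm_seq_lt ps).
have neq_a i : i < n -> nth 0 s i != a.
  by move=> lt_i; apply/eqP => /(perm_seq_inj ps); lia.
have size_p : size p = n by rewrite size_map size_take size_s ltnSn.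
have nth_p i : i < n -> nth 0 p i = nth 0 s i - (a < nth 0 s i).
  by move=> lt_i; rewrite (nth_map 0) ?nth_take // size_take size_s ltnSn.
exists p, a; split=> //.
  apply: perm_seqP => // [i lt_i|i j lt_i lt_j]; rewrite !nth_p //.
    by have := perm_seq_lt ps (ltnW lt_i); have := neq_a i lt_i; lia.
  move=> eq_ij; apply: (perm_seq_inj ps); try lia.
  by move: eq_ij (neq_a i lt_i) (neq_a j lt_j); lia.
apply: (@eq_from_nth _ 0); first by rewrite size_extend size_p size_s.
move=> i; rewrite size_s ltnS leq_eqVlt => /predU1P[->|lt_i].
  by rewrite (nth_extend_last _ size_p).
by rewrite nth_extend ?size_p // nth_p //; have := neq_a i lt_i; lia.
Qed.

Lemma extend_inj n p1 p2 a1 a2 : perm_seq n p1 -> perm_seq n p2 ->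
  extend p1 a1 = extend p2 a2 -> p1 = p2 /\ a1 = a2.
Proof.
move=> pp1 pp2 eq_ext.
have size1 := perm_seq_size pp1; have size2 := perm_seq_size pp2.
have eq_a : a1 = a2.
  by rewrite -(nth_extend_last a1 size1) -(nth_extend_last a2 size2) eq_ext.
split=> //; subst a2.
apply: (@eq_from_nth _ 0) => [|i]; first by rewrite size1 size2.
rewrite size1 => lt_i; have := congr1 (nth 0 ^~ i) eq_ext.
by rewrite !nth_extend ?size1 ?size2 //; lia.
Qed.

Lemma mem_perm_words n s : (s \in perm_words n) = perm_seq n s.
Proof.
elim: n s => [|n IHn] s; first by case: s.
apply/allpairsP/idP => [[[p a] [p_in a_in ->]]|].
  rewrite IHn in p_in; rewrite mem_iota in a_in.
  exact: perm_seq_extend.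
case/perm_seqS_extend => p [a [pp le_an ->]]; exists (p, a).
by rewrite IHn mem_iota ltnS.
Qed.

Lemma uniq_perm_words n : uniq (perm_words n).
Proof.
elim: n => [//|n IHn]; apply: allpairs_uniq => //; first exact: iota_uniq.
move=> [p1 a1] [p2 a2] in1 in2.
case: (allpairsP in1) => [[q1 b1] [/= q1_in _ [-> ->]]].
case: (allpairsP in2) => [[q2 b2] [/= q2_in _ [-> ->]]] /= eq_ext.
rewrite !mem_perm_words in q1_in q2_in.
by case: (extend_inj q1_in q2_in eq_ext) => -> ->.
Qed.

Lemma nth_perm_word k (t : 'S_k) (i : 'I_k) : nth 0 (perm_word t) i = t i.
Proof. by rewrite (nth_map i) ?size_enum_ord // nth_ord_enum. Qed.

Lemma size_perm_word k (t : 'S_k) : size (perm_word t) = k.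
Proof. by rewrite size_map size_enum_ord. Qed.

Lemma perm_seq_perm_word k (t : 'S_k) : perm_seq k (perm_word t).
Proof.
apply: perm_seqP => [|i lt_i|i j lt_i lt_j]; first exact: size_perm_word.
  by rewrite -[i]/(val (Ordinal lt_i)) nth_perm_word.
rewrite -[i]/(val (Ordinal lt_i)) -[j]/(val (Ordinal lt_j)) !nth_perm_word.
by move/val_inj/perm_inj => [].
Qed.

Lemma perm_word_inj k : injective (@perm_word k).
Proof.
move=> t1 t2 eq_t; apply/permP => i; apply: val_inj.
by rewrite /= -!nth_perm_word eq_t.
Qed.

Lemma perm_word_onto k s : perm_seq k s -> exists t : 'S_k, perm_word t = s.
Proof.
move=> ps; pose f (i : 'I_k) := Ordinal (perm_seq_lt ps (ltn_ord i)).
have inj_f : injective f.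
  by move=> i j /(congr1 val) /(perm_seq_inj ps (ltn_ord i) (ltn_ord j)) /val_inj.
exists (perm inj_f); apply: (@eq_from_nth _ 0) => [|i].
  by rewrite size_perm_word (perm_seq_size ps).
rewrite size_perm_word => lt_i.
by rewrite -[i]/(val (Ordinal lt_i)) nth_perm_word permE.
Qed.

Lemma card_perm_word k (P : pred (seq nat)) :
  #|[set t : 'S_k | P (perm_word t)]| = count P (perm_words k).
Proof.
have -> : #|[set t : 'S_k | P (perm_word t)]| = count (P \o @perm_word k) (enum 'S_k).
  rewrite cardsE cardE -size_filter /enum_mem -filter_predI.
  by congr size; apply: eq_filter => t /=; rewrite andbT.
rewrite -(count_map (@perm_word k)); apply/seq.permP.
apply: uniq_perm; first by rewrite map_inj_uniq ?enum_uniq //; apply: perm_word_inj.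
  exact: uniq_perm_words.
move=> s; rewrite mem_perm_words; apply/mapP/idP => [[t _ ->]|].
  exact: perm_seq_perm_word.
by case/perm_word_onto => t <-; exists t; rewrite ?mem_enum.
Qed.

Lemma sumn_scale (T : eqType) (s : seq T) (f : T -> nat) (P : pred T) c :
  {in s, forall x, f x = c * P x} -> sumn (map f s) = c * count P s.
Proof.
elim: s => [|x s IHs] f_s /=; first by rewrite muln0.
rewrite f_s ?mem_head // IHs ?mulnDr // => y s_y.
by apply: f_s; rewrite in_cons s_y orbT.
Qed.

Lemma count_pred1_iota x N : x < N -> count (pred1 x) (iota 0 N) = 1.
Proof. by move=> lt_xN; rewrite count_uniq_mem ?iota_uniq // mem_iota lt_xN. Qed.

Lemma count_andb_pred1_iota (t : bool) x N :
  x < N -> count (fun y => t && (y == x)) (iota 0 N) = t.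
Proof. by case: t => lt_xN; rewrite ?count_pred0 ?count_pred1_iota. Qed.

Lemma perm_wordsS n :
  perm_words n.+1 = flatten [seq [seq extend p a | a <- iota 0 n.+1] | p <- perm_words n].
Proof. by []. Qed.

Lemma count_perm_wordsS (Q : pred (seq nat)) n :
  count Q (perm_words n.+1) =
  sumn [seq count (fun a => Q (extend p a)) (iota 0 n.+1) | p <- perm_words n].
Proof.
rewrite perm_wordsS count_flatten -map_comp.
by congr sumn; apply: eq_map => p /=; rewrite count_map.
Qed.

Lemma count_perm_words_scale n (P Q : pred (seq nat)) c :
  (forall p, perm_seq n p -> count (fun a => Q (extend p a)) (iota 0 n.+1) = c * P p) ->
  count Q (perm_words n.+1) = c * count P (perm_words n).
Proof.
move=> count_ext; rewrite count_perm_wordsS; apply: sumn_scale => p.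
by rewrite mem_perm_words; apply: count_ext.
Qed.

Lemma count_perm_words_scale2 n (P Q : pred (seq nat)) c :
  (forall q, perm_seq n q ->
     sumn [seq count (fun b => Q (extend (extend q a) b)) (iota 0 n.+2) | a <- iota 0 n.+1]
     = c * P q) ->
  count Q (perm_words n.+2) = c * count P (perm_words n).
Proof.
move=> count_ext; rewrite count_perm_wordsS perm_wordsS map_flatten sumn_flatten.
rewrite -2!map_comp; apply: sumn_scale => q; rewrite mem_perm_words => qq.
by rewrite /= -map_comp; apply: count_ext.
Qed.

Lemma count_lt_iota x n : count (fun y => y < x) (iota 0 n) = minn x n.
Proof. by elim: n => [|n IHn]; rewrite ?minn0 // -addn1 iotaD count_cat IHn /=; lia. Qed.

Lemma perm_seq_iota n s : perm_seq n s -> perm_eq s (iota 0 n).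
Proof.
case/and3P=> /eqP size_s /allP lt_s uniq_s.
apply: uniq_perm; rewrite ?iota_uniq //.
have sub_s : {subset s <= iota 0 n} by move=> x /lt_s; rewrite mem_iota.
by have [] := uniq_min_size uniq_s sub_s; rewrite ?size_iota ?size_s.
Qed.

Lemma pattern_perm_seq n s : perm_seq n s -> pattern s = s.
Proof.
move=> ps; apply: map_id_in => x s_x.
rewrite (seq.permP (perm_seq_iota ps)) count_lt_iota.
by case/and3P: ps => _ /allP /(_ x s_x); lia.
Qed.

Lemma pattern_map_mono (f : nat -> nat) s :
  {mono f : x y / x < y} -> pattern (map f s) = pattern s.
Proof.
move=> mono_f; rewrite /pattern -map_comp; apply: eq_map => x /=.
by rewrite count_map; apply: eq_count => y /=; apply: mono_f.
Qed.

Lemma pattern_shift a s : pattern [seq x + (a <= x) | x <- s] = pattern s.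
Proof. by apply: pattern_map_mono => x y; apply/idP/idP; lia. Qed.

Definition jset_mem (w : seq nat) j :=
  (j == 0) || (1 <= j) && is_involution_word (pattern (take j w)).

Definition jset_all_but m (w : seq nat) :=
  all (fun j => jset_mem w j == (j != m)) (iota 0 (size w).+1).

Lemma jset_perm_word k (t : 'S_k) (j : 'I_k.+1) : (j \in jset t) = jset_mem (perm_word t) j.
Proof. by rewrite inE. Qed.

Lemma jset_mem_extend n p a j :
  perm_seq n p -> j <= n -> jset_mem (extend p a) j = jset_mem p j.
Proof.
move=> pp le_jn; rewrite /jset_mem /extend -cats1 take_cat size_map.
rewrite (perm_seq_size pp); case: (ltnP j n) => [_|le_nj].
  by rewrite -map_take pattern_shift.
have -> : j = n by lia.
rewrite subnn take0 cats0 -(perm_seq_size pp) take_size.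
by rewrite pattern_shift.
Qed.

Lemma jset_mem_size n w :
  perm_seq n w -> 1 <= n -> jset_mem w n = is_involution_word w.
Proof.
move=> pw n_gt0; rewrite /jset_mem n_gt0 -(perm_seq_size pw) take_size.
by rewrite (pattern_perm_seq pw) (perm_seq_size pw); case: n n_gt0 pw.
Qed.

Lemma jset_all_but_extend m n p a : perm_seq n p -> a <= n ->
  jset_all_but m (extend p a) =
  jset_all_but m p && (is_involution_word (extend p a) == (n.+1 != m)).
Proof.
move=> pp le_an; rewrite /jset_all_but size_extend (perm_seq_size pp).
rewrite -addn1 iotaD all_cat all_seq1; congr andb.
  by apply: eq_in_all => j; rewrite mem_iota => /andP[_ lt_j]; rewrite (jset_mem_extend _ pp).
by rewrite (jset_mem_size (perm_seq_extend pp le_an)).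
Qed.

Section JsetAllBut.

Variables (m n : nat) (p : seq nat).
Hypotheses (pp : perm_seq n p) (all_but_p : jset_all_but m p).

Lemma jset_all_but_mem j : j <= n -> jset_mem p j = (j != m).
Proof.
move: all_but_p => /allP all_p le_jn; apply/eqP/all_p.
by rewrite mem_iota (perm_seq_size pp).
Qed.

Lemma jset_all_but_involution : 1 <= n -> is_involution_word p = (n != m).
Proof. by move=> n_gt0; rewrite -(jset_mem_size pp n_gt0) jset_all_but_mem. Qed.

End JsetAllBut.

Lemma involution_wordP w :
  reflect (forall i, i < size w -> nth 0 w (nth 0 w i) = i) (is_involution_word w).
Proof.
apply: (iffP forallP) => [inv_w i lt_i|inv_w i]; last by apply/eqP/inv_w.
by have /eqP := inv_w (Ordinal lt_i).
Qed.

(* For an involution [p] of length [n] with last letter [c]: the letters at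
   positions [c, ..., n-1] are [n-1, ..., c], a final decreasing block. *)
Definition reversed_tail (p : seq nat) :=
  [forall i : 'I_(size p), (nth 0 p (size p).-1 <= i) ==>
     (nth 0 p i == nth 0 p (size p).-1 + (size p).-1 - i)].

Lemma reversed_tailP n p : size p = n ->
  reflect (forall i, i < n -> nth 0 p n.-1 <= i -> nth 0 p i = nth 0 p n.-1 + n.-1 - i)
          (reversed_tail p).
Proof.
move=> <-; apply: (iffP forallP) => [rev_p i lt_i|rev_p i].
  by have /implyP rev_i := rev_p (Ordinal lt_i); move=> /rev_i /eqP.
by apply/implyP => le_ci; apply/eqP/rev_p.
Qed.

Section InvolutionExtend.

Variables (n : nat) (p : seq nat).
Hypotheses (pp : perm_seq n p) (inv_p : is_involution_word p).

Local Notation c := (nth 0 p n.-1).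

Let size_p : size p = n := perm_seq_size pp.
Let lt_p : forall i, i < n -> nth 0 p i < n := perm_seq_lt pp.

Lemma perm_seq_involutive i : i < n -> nth 0 p (nth 0 p i) = i.
Proof. by move: inv_p => /involution_wordP inv_p' lt_i; apply: inv_p'; rewrite size_p. Qed.

Lemma reversed_tail_lt i :
  reversed_tail p -> 1 <= n -> i < c -> nth 0 p i < c.
Proof.
move=> /(reversed_tailP size_p) rev_p n_gt0 lt_ic.
have lt_cn : c < n by apply: lt_p; lia.
have lt_in : i < n by lia.
rewrite ltnNge; apply/negP => /(rev_p _ (lt_p lt_in)).
by rewrite perm_seq_involutive //; have := lt_p lt_in; lia.
Qed.

Lemma involution_extend_lt a :
  a < n -> is_involution_word (extend p a) -> a = c.
Proof.
move=> lt_an /involution_wordP inv_ext.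
have := inv_ext n; rewrite size_extend size_p ltnSn (nth_extend_last _ size_p).
rewrite nth_extend ?size_p // => /(_ isT) pa_n.
have := lt_p lt_an => lt_pa.
by rewrite -(perm_seq_involutive lt_an); congr nth; lia.
Qed.

Lemma involution_extend_top :
  is_involution_word (extend p n) /\ reversed_tail (extend p n).
Proof.
have ext_lt i : i < n -> nth 0 (extend p n) i = nth 0 p i.
  by move=> lt_i; rewrite nth_extend ?size_p //; have := lt_p lt_i; lia.
have ext_n := nth_extend_last n size_p.
split.
  apply/involution_wordP => i; rewrite size_extend size_p ltnS leq_eqVlt.
  case/predU1P => [->|lt_i]; first by rewrite !ext_n.
  by rewrite !ext_lt ?perm_seq_involutive ?lt_p.
apply/(reversed_tailP (n := n.+1)); rewrite ?size_extend ?size_p //= ext_n => i lt_i le_ni.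
have -> : i = n by lia.
by rewrite ext_n; lia.
Qed.

Lemma involution_extend_last : reversed_tail p -> 1 <= n ->
  is_involution_word (extend p c) /\ reversed_tail (extend p c).
Proof.
move=> rev_p n_gt0; have block_lt i := @reversed_tail_lt i rev_p n_gt0.
move/(reversed_tailP size_p): rev_p => rev_p.
have lt_cn : c < n by apply: lt_p; lia.
have ext_n := nth_extend_last c size_p.
have ext_lo i : i < c -> nth 0 (extend p c) i = nth 0 p i.
  by move=> lt_ic; rewrite nth_extend ?size_p; [have := block_lt _ lt_ic|]; lia.
have ext_hi i : c <= i < n -> nth 0 (extend p c) i = c + n - i.
  by case/andP=> le_ci lt_in; rewrite nth_extend ?size_p // rev_p //; lia.
split.
  apply/involution_wordP => i; rewrite size_extend size_p ltnS leq_eqVlt.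
  case/predU1P => [->|lt_in]; first by rewrite ext_n ext_hi; lia.
  case: (ltnP i c) => [lt_ic|le_ci].
    by rewrite ext_lo // ext_lo ?perm_seq_involutive ?block_lt.
  rewrite (ext_hi i) ?le_ci //; case: (eqVneq i c) => [->|ne_ic].
    by rewrite (_ : c + n - c = n) ?ext_n //; lia.
  by rewrite ext_hi; lia.
apply/(reversed_tailP (n := n.+1)); rewrite ?size_extend ?size_p //= ext_n.
move=> i; rewrite ltnS leq_eqVlt => /predU1P[->|lt_in] le_ci; first by rewrite ext_n; lia.
by rewrite ext_hi ?le_ci.
Qed.

Lemma reversed_tail_of_involution_extend :
  1 <= n -> is_involution_word (extend p c) -> reversed_tail p.
Proof.
move=> n_gt0 /involution_wordP inv_ext.
have lt_cn : c < n by apply: lt_p; lia.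
have tail d : d <= n.-1 - c -> nth 0 p (n.-1 - d) = c + d.
  elim: d => [|d IHd] le_d; first by rewrite subn0 addn0.
  set b := n.-1 - d.+1; set i := nth 0 p b.
  have lt_bn : b < n by rewrite /b; lia.
  have lt_in : i < n := lt_p lt_bn.
  have ext_i : nth 0 (extend p c) i = n.-1 - d.
    by rewrite nth_extend ?size_p // perm_seq_involutive /b; lia.
  have ext_nd : nth 0 (extend p c) (n.-1 - d) = c + d.+1.
    by rewrite nth_extend ?size_p ?IHd; lia.
  have := inv_ext i; rewrite size_extend size_p ext_i ext_nd => /(_ (ltnW lt_in)).
  by rewrite /i => ->.
apply/(reversed_tailP size_p) => i lt_in le_ci.
by have := tail (n.-1 - i); rewrite subKn; lia.
Qed.

Lemma reversed_tail_extend a :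
  a <= n -> is_involution_word (extend p a) -> reversed_tail (extend p a).
Proof.
rewrite leq_eqVlt => /predU1P[->|lt_an] inv_ext; first by case: involution_extend_top.
have n_gt0 : 1 <= n by lia.
have eq_ac := involution_extend_lt lt_an inv_ext; rewrite eq_ac in inv_ext *.
by case: involution_extend_last; rewrite ?reversed_tail_of_involution_extend.
Qed.

Lemma count_involution_extend : 1 <= n ->
  count (fun a => is_involution_word (extend p a)) (iota 0 n.+1) = (reversed_tail p).+1.
Proof.
move=> n_gt0; have lt_cn : c < n by apply: lt_p; lia.
rewrite (@eq_in_count _ _ (predU (pred1 n) (fun a => reversed_tail p && (a == c)))).
  have := count_predUI (pred1 n) (fun a => reversed_tail p && (a == c)) (iota 0 n.+1).
  rewrite (@eq_count _ (predI _ _) pred0) => [|a /=]; last first.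
    by apply/negbTE/andP => -[/eqP -> /andP[_ /eqP]]; lia.
  rewrite count_pred0 addn0 => ->.
  by rewrite count_pred1_iota // count_andb_pred1_iota // ltnW.
move=> a; rewrite mem_iota ltnS /= => le_an.
case: (eqVneq a n) => [->|ne_an] /=; first by case: involution_extend_top.
have lt_an : a < n by lia.
apply/idP/andP => [inv_ext|[rev_p /eqP ->]].
  have eq_ac := involution_extend_lt lt_an inv_ext.
  by split; [apply: reversed_tail_of_involution_extend; rewrite -?eq_ac|apply/eqP].
by case: involution_extend_last.
Qed.

End InvolutionExtend.

Lemma involution_of_reversed_tail_extend n r b : perm_seq n r -> b <= n ->
  is_involution_word (extend r b) -> reversed_tail (extend r b) -> is_involution_word r.
Proof.
move=> pr le_bn inv_w rev_w; have size_r := perm_seq_size pr.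
have pw := perm_seq_extend pr le_bn.
have size_w : size (extend r b) = n.+1 by rewrite size_extend size_r.
have w_n := nth_extend_last b size_r.
have block_lt i := @reversed_tail_lt _ _ pw inv_w i rev_w (ltn0Sn n).
rewrite /= w_n in block_lt.
move/(reversed_tailP size_w): rev_w; rewrite /= w_n => rev_w.
have lo i : i < b -> nth 0 r i = nth 0 (extend r b) i /\ nth 0 r i < b.
  by move=> lt_ib; have := block_lt _ lt_ib; rewrite nth_extend ?size_r; lia.
have hi i : b <= i -> i < n -> nth 0 r i = b + n.-1 - i.
  move=> le_bi lt_in; have := rev_w i (ltnW lt_in) le_bi.
  by rewrite nth_extend ?size_r //; have := perm_seq_lt pr lt_in; lia.
apply/involution_wordP => i; rewrite size_r => lt_in.
case: (ltnP i b) => [lt_ib|le_bi]; last by rewrite hi // hi; lia.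
have [eq_i lt_ri] := lo _ lt_ib; have [eq_ri _] := lo _ lt_ri.
by rewrite eq_ri eq_i (perm_seq_involutive pw inv_w); lia.
Qed.

Lemma involution_extend_cases n r b : perm_seq n r -> b <= n ->
  is_involution_word (extend r b) ->
  b = n /\ is_involution_word r \/ b < n /\ nth 0 r b = n.-1.
Proof.
move=> pr le_bn inv_w; have size_r := perm_seq_size pr.
have pw := perm_seq_extend pr le_bn.
case: (eqVneq b n) => [eq_bn|ne_bn]; [left; split=> //; subst b|right].
  have ext_lt i : i < n -> nth 0 (extend r n) i = nth 0 r i.
    by move=> lt_in; rewrite nth_extend ?size_r //; have := perm_seq_lt pr lt_in; lia.
  apply/involution_wordP => i; rewrite size_r => lt_in.
  have := perm_seq_involutive pw inv_w (ltn_trans lt_in (ltnSn n)).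
  by rewrite !ext_lt ?(perm_seq_lt pr).
have lt_bn : b < n by lia.
have := perm_seq_involutive pw inv_w (ltnSn n).
rewrite (nth_extend_last _ size_r) nth_extend ?size_r //.
by have := perm_seq_lt pr lt_bn; split=> //; lia.
Qed.

Lemma nth_extend2 q a b i : i < size q ->
  nth 0 (extend (extend q a) b) i =
  nth 0 q i + (a <= nth 0 q i) + (b <= nth 0 q i + (a <= nth 0 q i)).
Proof. by move=> lt_i; rewrite !nth_extend ?size_extend //; apply: ltnW. Qed.

Lemma nth_extend2_size q a b n : size q = n ->
  nth 0 (extend (extend q a) b) n = a + (b <= a).
Proof. by move=> size_q; rewrite nth_extend ?size_extend ?size_q // (nth_extend_last _ size_q). Qed.

Lemma nth_extend2_last q a b n : size q = n ->
  nth 0 (extend (extend q a) b) n.+1 = b.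
Proof. by move=> size_q; apply: nth_extend_last; rewrite size_extend size_q. Qed.

Section TwoExtensions.

Variables (n : nat) (q : seq nat).
Hypotheses (n_ge2 : 2 <= n) (pq : perm_seq n q) (inv_q : is_involution_word q).
Hypotheses (rev_q : reversed_tail q)
           (rev_prefix : nth 0 q n.-1 = n.-1 -> reversed_tail (take n.-1 q)).

Local Notation c := (nth 0 q n.-1).
Local Notation d := (nth 0 q n.-2).

Let size_q : size q = n := perm_seq_size pq.
Let lt_q : forall i, i < n -> nth 0 q i < n := perm_seq_lt pq.
Let q_inv : forall i, i < n -> nth 0 q (nth 0 q i) = i :=
  perm_seq_involutive pq inv_q.
Let lt_n1 : n.-1 < n. Proof. by rewrite ltn_predL ltnW. Qed.
Let lt_cn : c < n := lt_q lt_n1.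
Let q_c : nth 0 q c = n.-1 := q_inv lt_n1.
Let tail_q : forall i, i < n -> c <= i -> nth 0 q i = c + n.-1 - i :=
  elimT (reversed_tailP size_q) rev_q.
Let block_q i : i < c -> nth 0 q i < c :=
  @reversed_tail_lt _ _ pq inv_q i rev_q (ltnW n_ge2).

Lemma extend2_involution_second a b : a <= n -> b <= n.+1 ->
  ~~ is_involution_word (extend q a) -> is_involution_word (extend (extend q a) b) ->
  a < n /\ b = c.
Proof.
move=> le_an le_bn not_inv inv_w.
have [[_ inv_r]|[lt_bn r_b]] := involution_extend_cases (perm_seq_extend pq le_an) le_bn inv_w.
  by rewrite inv_r in not_inv.
have lt_an : a < n.
  rewrite ltn_neqAle le_an andbT; apply: contraNneq not_inv => ->.
  by case: (involution_extend_top pq inv_q).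
have {}lt_bn : b < n.
  move: lt_bn r_b; rewrite ltnS leq_eqVlt => /predU1P[->|//].
  by rewrite (nth_extend_last _ size_q); lia.
split=> //; move: r_b; rewrite nth_extend ?size_q //= => r_b.
by rewrite -(q_inv lt_bn); congr nth; have := lt_q lt_bn; lia.
Qed.

Lemma extend2_involution_first a : a < n ->
  ~~ is_involution_word (extend q a) -> is_involution_word (extend (extend q a) c) ->
  a = if c == n.-1 then d else n.-1.
Proof.
move=> lt_an not_inv /involution_wordP inv_w.
have [inv_c _] := involution_extend_last pq inv_q rev_q (ltnW n_ge2).
have d_c : c < n.-1 -> d = c.+1.
  by move=> lt_c; rewrite tail_q; lia.
(* The double extension sends [j < n] to [n] only if [nth 0 q j] is [n-1]
   or [n-2], that is only if [j = c] or [j = d]. *)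
have hit_n j : j < n -> j != c ->
    nth 0 (extend (extend q a) c) j = n -> j = d.
  move=> lt_jn ne_jc; rewrite nth_extend2 ?size_q // => w_j.
  have ne_qj : nth 0 q j != n.-1 by apply: contra ne_jc => /eqP <-; rewrite q_inv.
  by rewrite -(q_inv lt_jn); congr nth; have := lt_q lt_jn; move: ne_qj; lia.
have := inv_w n; rewrite (nth_extend2_size _ _ size_q) !size_extend size_q => /(_ (leqnSn _)).
case: (ltnP a c) => [lt_ac|le_ca].
  rewrite addn0 => /hit_n eq_ad; rewrite eq_ad //; last by rewrite ltn_eqF.
  case: (eqVneq c n.-1) => // ne_c.
  have lt_c : c < n.-1 by lia.
  by have := d_c lt_c; lia.
have [eq_ac|ne_ac] := eqVneq a c; first by rewrite eq_ac inv_c in not_inv.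
case: (eqVneq a n.-1) => [eq_a | ne_a].
  by case: (eqVneq c n.-1) => // eq_c; move: ne_ac; rewrite eq_a eq_c eqxx.
rewrite addn1 => /hit_n eq_d; have := d_c; lia.
Qed.

Lemma extend2_involution_long_block : c < n.-1 ->
  ~~ is_involution_word (extend q n.-1) /\ is_involution_word (extend (extend q n.-1) c).
Proof.
move=> lt_c; split.
  apply/negP => /(perm_seq_involutive (perm_seq_extend pq (leq_pred n)))/(_ n (ltnSn n)).
  by rewrite (nth_extend_last _ size_q) nth_extend ?size_q //; lia.
set w := extend _ c.
have w_lt j : j < n -> nth 0 w j =
    nth 0 q j + (n.-1 <= nth 0 q j) + (c <= nth 0 q j + (n.-1 <= nth 0 q j)).
  by move=> lt_j; rewrite nth_extend2 ?size_q.
have w_n : nth 0 w n = n by rewrite (nth_extend2_size _ _ size_q); lia.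
have w_n1 : nth 0 w n.+1 = c by rewrite (nth_extend2_last _ _ size_q).
have w_c : nth 0 w c = n.+1 by rewrite w_lt ?q_c //; lia.
apply/involution_wordP => i; rewrite !size_extend size_q.
rewrite ltnS leq_eqVlt => /predU1P[->|]; first by rewrite w_n1 w_c.
rewrite ltnS leq_eqVlt => /predU1P[->|lt_in]; first by rewrite !w_n.
case: (ltngtP i c) => [lt_ic|lt_ci|->]; last by rewrite w_c w_n1.
  have lt_qi := block_q lt_ic.
  have w_i : nth 0 w i = nth 0 q i by rewrite w_lt //; lia.
  by rewrite w_i w_lt ?q_inv //; lia.
have w_i : nth 0 w i = c + n - i by rewrite w_lt // tail_q //; lia.
by rewrite w_i w_lt ?(tail_q (i := c + n - i)); lia.
Qed.

Lemma extend2_involution_fixed_last : c = n.-1 ->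
  ~~ is_involution_word (extend q d) /\ is_involution_word (extend (extend q d) n.-1).
Proof.
move=> c_n1; have rev_q' := rev_prefix c_n1; have lt_n2 : n.-2 < n by lia.
have q_d : nth 0 q d = n.-2 := q_inv lt_n2.
have lt_d : d < n.-1.
  have := lt_q lt_n2; have := perm_seq_inj pq lt_n2 lt_n1; lia.
have tail' i : d <= i -> i <= n.-2 -> nth 0 q i = d + n.-2 - i.
  have size_q' : size (take n.-1 q) = n.-1 by rewrite size_take size_q lt_n1.
  move=> le_di le_in; have := elimT (reversed_tailP size_q') rev_q' i.
  by rewrite !nth_take; try lia; move=> -> //; lia.
have block' i : i < d -> nth 0 q i < d.
  move=> lt_id; have lt_in : i < n by lia.
  rewrite ltnNge; apply/negP => le_dq; have := q_inv lt_in.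
  have [eq_qi|ne_qi] := eqVneq (nth 0 q i) n.-1; first by rewrite eq_qi c_n1; lia.
  by rewrite tail' //; have := lt_q lt_in; lia.
split.
  apply/negP => /(perm_seq_involutive (perm_seq_extend pq (ltnW (lt_q lt_n2))))/(_ n (ltnSn n)).
  by rewrite (nth_extend_last _ size_q) nth_extend ?size_q ?q_d; lia.
set w := extend _ n.-1.
have w_lt j : j < n -> nth 0 w j =
    nth 0 q j + (d <= nth 0 q j) + (n.-1 <= nth 0 q j + (d <= nth 0 q j)).
  by move=> lt_j; rewrite nth_extend2 ?size_q.
have w_n : nth 0 w n = d by rewrite (nth_extend2_size _ _ size_q); lia.
have w_n1 : nth 0 w n.+1 = n.-1 by rewrite (nth_extend2_last _ _ size_q).
have w_last : nth 0 w n.-1 = n.+1 by rewrite w_lt // c_n1; lia.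
have w_d : nth 0 w d = n by rewrite w_lt ?q_d; lia.
apply/involution_wordP => i; rewrite !size_extend size_q.
rewrite ltnS leq_eqVlt => /predU1P[->|]; first by rewrite w_n1 w_last.
rewrite ltnS leq_eqVlt => /predU1P[->|lt_in]; first by rewrite w_n w_d.
have [->|ne_i1] := eqVneq i n.-1; first by rewrite w_last w_n1.
case: (ltngtP i d) => [lt_id|lt_di|->]; last by rewrite w_d w_n.
  have lt_qi := block' _ lt_id.
  have w_i : nth 0 w i = nth 0 q i by rewrite w_lt //; lia.
  by rewrite w_i w_lt ?q_inv //; lia.
have w_i : nth 0 w i = d + n.-1 - i by rewrite w_lt // tail'; lia.
by rewrite w_i w_lt ?(tail' (d + n.-1 - i)); lia.
Qed.

Lemma extend2_involutionE a b : a <= n -> b <= n.+1 ->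
  ~~ is_involution_word (extend q a) && is_involution_word (extend (extend q a) b) =
  (a == if c == n.-1 then d else n.-1) && (b == c).
Proof.
move=> le_an le_bn; apply/andP/andP => [[not_inv inv_w]|[/eqP -> /eqP ->]].
  have [lt_an eq_bc] := extend2_involution_second le_an le_bn not_inv inv_w.
  rewrite eq_bc in inv_w.
  by rewrite (extend2_involution_first lt_an not_inv inv_w) eq_bc !eqxx.
case: (eqVneq c n.-1) => [c_n1|ne_c]; first by rewrite c_n1; apply: extend2_involution_fixed_last.
by apply: extend2_involution_long_block; lia.
Qed.

End TwoExtensions.

Lemma jset_all_but_reversed_tail m n p : 1 <= m -> perm_seq n p -> jset_all_but m p ->
  1 <= n -> n != m -> reversed_tail p = (n != m.+1).
Proof.
case: n => // n m_gt0 pp + _ ne_nm.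
have [r [b [pr le_bn ->]]] := perm_seqS_extend pp.
rewrite (jset_all_but_extend _ pr le_bn) ne_nm => /andP[all_but_r /eqP inv_w].
have [eq_nm|ne_nm'] := eqVneq n m.
  rewrite eq_nm eqxx; apply/negbTE/negP.
  move/(involution_of_reversed_tail_extend pr le_bn inv_w).
  by rewrite (jset_all_but_involution pr all_but_r) eq_nm ?eqxx //; lia.
have inv_r : is_involution_word r.
  have [n0|n_gt0] := posnP n; last by rewrite (jset_all_but_involution pr all_but_r).
  by move: pr; rewrite n0 => /perm_seq_size/size0nil ->; apply/forallP => -[].
by rewrite eqSS ne_nm' (reversed_tail_extend pr inv_r le_bn inv_w).
Qed.

Lemma count_jset_all_but_extend m n p : 1 <= m -> perm_seq n p -> 1 <= n ->
  n != m -> n.+1 != m ->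
  count (fun a => jset_all_but m (extend p a)) (iota 0 n.+1) =
  (n != m.+1).+1 * jset_all_but m p.
Proof.
move=> m_gt0 pp n_gt0 ne_nm ne_n1m.
have [all_but_p|not_all_but] := boolP (jset_all_but m p); last first.
  rewrite muln0 (@eq_in_count _ _ pred0) ?count_pred0 // => a.
  by rewrite mem_iota => /andP[_ lt_a]; rewrite (jset_all_but_extend _ pp) ?(negbTE not_all_but).
have inv_p : is_involution_word p by rewrite (jset_all_but_involution pp all_but_p).
rewrite muln1 -(jset_all_but_reversed_tail m_gt0 pp all_but_p n_gt0 ne_nm).
rewrite -(count_involution_extend pp inv_p n_gt0).
apply: eq_in_count => a; rewrite mem_iota => /andP[_ lt_a].
by rewrite (jset_all_but_extend _ pp) // all_but_p ne_n1m eqb_id.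
Qed.

Lemma count_jset_all_but_lt m n : 1 <= n < m ->
  count (jset_all_but m) (perm_words n) = 2 ^ n.-1.
Proof.
elim: n => [//|n IHn] /andP[_ lt_nm].
have [n0|n_gt0] := posnP n.
  have inv0 : is_involution_word [:: 0] by apply/forallP => -[[]].
  rewrite n0 /= /jset_all_but /= /jset_mem /= inv0.
  by case: m lt_nm {IHn} => [|[|m]].
rewrite (@count_perm_words_scale _ (jset_all_but m) _ 2) => [|p pp].
  by rewrite IHn ?n_gt0 -?expnS ?prednK //; lia.
by rewrite count_jset_all_but_extend //; lia.
Qed.

Lemma jset_all_but_prefix m n q : perm_seq n q -> jset_all_but m q -> 2 <= n -> n < m ->
  nth 0 q n.-1 = n.-1 -> reversed_tail (take n.-1 q).
Proof.
case: n => // n pq + n_ge2 lt_nm.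
have [r [a [pr le_an ->]]] := perm_seqS_extend pq.
rewrite (jset_all_but_extend _ pr le_an) => /andP[all_but_r _].
rewrite /= (nth_extend_last _ (perm_seq_size pr)) => eq_an.
have -> : take n (extend r a) = r.
  rewrite /extend -cats1 take_cat size_map (perm_seq_size pr) ltnn subnn take0 cats0 eq_an.
  by case/and3P: pr => _ /allP lt_r _; apply: map_id_in => x /lt_r; lia.
by rewrite (jset_all_but_reversed_tail _ pr all_but_r); lia.
Qed.

Lemma count_jset_all_but_extend2 n q : 2 <= n -> perm_seq n q ->
  sumn [seq count (fun b => jset_all_but n.+1 (extend (extend q a) b)) (iota 0 n.+2)
       | a <- iota 0 n.+1] = jset_all_but n.+1 q.
Proof.
move=> n_ge2 pq; have lt_q := perm_seq_lt pq.
have ext2E a b : a <= n -> b <= n.+1 -> jset_all_but n.+1 (extend (extend q a) b) =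
    jset_all_but n.+1 q && ~~ is_involution_word (extend q a) &&
    is_involution_word (extend (extend q a) b).
  move=> le_an le_bn; have pqa := perm_seq_extend pq le_an.
  rewrite (jset_all_but_extend _ pqa) ?(jset_all_but_extend _ pq) //.
  by rewrite eqxx eqbF_neg (_ : n.+2 != n.+1) ?eqb_id ?andbA //; lia.
have [all_but_q|not_all_but] := boolP (jset_all_but n.+1 q); last first.
  rewrite -[RHS](count_pred0 (iota 0 n.+1)) -[count _ _]mul1n.
  apply: sumn_scale => a; rewrite mem_iota => lt_a.
  rewrite (@eq_in_count _ _ pred0) ?count_pred0 // => b; rewrite mem_iota => lt_b.
  by rewrite ext2E ?(negbTE not_all_but) //; lia.
have inv_q : is_involution_word q by rewrite (jset_all_but_involution pq all_but_q); lia.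
have rev_q : reversed_tail q by rewrite (jset_all_but_reversed_tail _ pq all_but_q); lia.
have rev_prefix := jset_all_but_prefix pq all_but_q n_ge2 (ltnSn n).
set a0 := if nth 0 q n.-1 == n.-1 then nth 0 q n.-2 else n.-1.
transitivity (1 * count (pred1 a0) (iota 0 n.+1)).
  apply: sumn_scale => a; rewrite mem_iota => /andP[_ lt_a]; rewrite mul1n.
  rewrite (@eq_in_count _ _ (fun b => (a == a0) && (b == nth 0 q n.-1))).
    by rewrite count_andb_pred1_iota //; have := lt_q n.-1; lia.
  move=> b; rewrite mem_iota => /andP[_ lt_b].
  by rewrite ext2E // all_but_q -andbA (extend2_involutionE n_ge2 pq inv_q rev_q rev_prefix).
rewrite mul1n count_pred1_iota // /a0; case: ifP => _; last lia.
by have := lt_q n.-2; lia.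
Qed.

Lemma count_jset_all_but_succ m : 3 <= m ->
  count (jset_all_but m) (perm_words m.+1) = 2 ^ (m - 2).
Proof.
case: m => // n n_ge2.
rewrite (@count_perm_words_scale2 _ (jset_all_but n.+1) _ 1) => [|q pq].
  by rewrite mul1n count_jset_all_but_lt; [congr (2 ^ _)|]; lia.
by rewrite mul1n count_jset_all_but_extend2.
Qed.

Lemma count_jset_all_but_ge m n : 3 <= m -> m.+2 <= n ->
  count (jset_all_but m) (perm_words n) = 2 ^ (n - 4).
Proof.
move=> m_ge3; elim: n => [|n IHn] le_mn; first lia.
rewrite (@count_perm_words_scale _ (jset_all_but m) _ (n != m.+1).+1) => [|p pp]; last first.
  by rewrite count_jset_all_but_extend //; lia.
have [->|ne_n] := eqVneq n m.+1.
  by rewrite mul1n count_jset_all_but_succ //; congr (2 ^ _); lia.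
by rewrite IHn -?expnS; [congr (2 ^ _)|]; lia.
Qed.

Lemma jset_eq_setC1 k (t : 'S_k) (x : 'I_k.+1) :
  (jset t == [set~ x]) = jset_all_but x (perm_word t).
Proof.
apply/eqP/allP => [jset_t j|all_but_t].
  rewrite mem_iota size_perm_word => /andP[_ lt_j].
  have := jset_perm_word t (Ordinal lt_j); rewrite jset_t !inE => <-.
  by rewrite -(inj_eq val_inj).
apply/setP => j; rewrite jset_perm_word !inE.
have := all_but_t j; rewrite mem_iota size_perm_word ltn_ord => /(_ isT) /eqP ->.
by rewrite -(inj_eq val_inj).
Qed.

Theorem mainTheorem13 (k : nat) (E : {set 'I_k.+1}) :
  5 <= k ->
  (inord 0 : 'I_k.+1) \in E -> (inord 1 : 'I_k.+1) \in E ->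
  (inord 2 : 'I_k.+1) \in E -> (inord k : 'I_k.+1) \in E ->
  #|E| = k ->
  #|[set tau : 'S_k | jset tau == E]| =
    (if (inord k.-1 : 'I_k.+1) \in E then 2 ^ (k - 4) else 2 ^ (k - 3)).
Proof.
move=> k_ge5 E0 E1 E2 Ek card_E.
have [x E_x] : exists x, E = [set~ x].
  have /cards1P[x E'_x] : #|~: E| == 1 by have := cardsC E; rewrite card_ord card_E; lia.
  by exists x; rewrite -E'_x setCK.
have inE_nat j : j <= k -> ((inord j : 'I_k.+1) \in E) = (j != x).
  by move=> le_jk; rewrite E_x !inE -(inj_eq val_inj) /= inordK.
have -> : [set tau : 'S_k | jset tau == E] = [set tau | jset_all_but x (perm_word tau)].
  by apply/setP => t; rewrite !inE E_x jset_eq_setC1.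
rewrite card_perm_word inE_nat; last lia.
have : 3 <= x < k.
  by move: E0 E1 E2 Ek (ltn_ord x); rewrite !inE_nat; lia.
move: (nat_of_ord x) => m /andP[m_ge3 lt_mk].
have [->|ne_k] := eqVneq k m.+1.
  by rewrite eqxx count_jset_all_but_succ //; congr (2 ^ _); lia.
by rewrite (_ : k.-1 != m) ?count_jset_all_but_ge //; lia.
Qed.
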